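(* If $k$ is even (and $k\ge2$), then $f(n,k)\ge\left(1-\frac{4}{k(k+2)}-o(1)\right)\binom{n}{3}$, where $o(1)\to0$ as $n\to\infty$ with $k$ fixed.
   Context: Let $K^{(2)}_n$ be the complete graph on $[n]$ with the natural order. A $k$-edge-labeling $\phi$ of $K^{(2)}_n$ assigns to each pair $uv$ a label from a fixed linearly ordered set of size $k$. A triple $u<v<w$ is good if $\phi(uv)<\phi(vw)$, and bad otherwise. $f(n,k)$ is the maximum, over all $k$-edge-labelings of $K^{(2)}_n$, of the number of good triples. *)

From HB Require Import structures.
From mathcomp Require Import all_boot all_order all_algebra.
Set Implicit Arguments. Unset Strict Implicit. Unset Printing Implicit Defensive.

(* A k-edge-labeling of K_n on vertex set 'I_n = {0,...,n-1} (natural order),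
   with labels in 'I_k (linearly ordered, size k).  The label of the pair
   {u,v} with u < v is phi (u, v); values of phi on pairs (u,v) with u >= v
   are irrelevant (never read). *)
Definition labeling (n k : nat) := {ffun 'I_n * 'I_n -> 'I_k}.

Definition good (n k : nat) (phi : labeling n k) (u v w : 'I_n) : bool :=
  [&& (u < v)%N, (v < w)%N & (phi (u, v) < phi (v, w))%N].

Definition good_count (n k : nat) (phi : labeling n k) : nat :=
  #|[set t : 'I_n * 'I_n * 'I_n | good phi t.1.1 t.1.2 t.2]|.

Definition f (n k : nat) : nat :=
  \max_(phi : labeling n k) good_count phi.

From HB Require Import structures.
From mathcomp Require Import all_boot all_order all_algebra.
From mathcomp Require Import zify ring lra.
Import Order.TTheory GRing.Theory Num.Theory.
Set Implicit Arguments. Unset Strict Implicit. Unset Printing Implicit Defensive.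

(* Write k = 2m and N = m(m+1)q.  Split [0, N) into 2m consecutive blocks of lengths
   g_0, ..., g_(2m-1) = mq, q, (m-1)q, 2q, ..., q, mq ending at E_1 < ... < E_2m = N,
   and label a pair u < v by the number of lines 0 < c < 2m lying below (u, v), line c
   passing through (E_c, E_c) and (E_(c-1), E_(c+1)).  For u < v < w, a line below
   (u, v) has E_c < v, and a line with E_c < v is below (v, w); so
   label(u, v) <= #{c | E_c < v} <= label(v, w), with equality throughout in a bad
   triple.  If v lies in block c, this puts (u, v) above line c and (v, w) not above
   line c + 1, which confines u and w to intervals proportional to the distances from
   v to the ends of the block; summing over the block leaves at most
   g_c (g_(c-1) + g_c) (g_c + g_(c+1)) / 6 bad triples.  Sums of consecutive block
   lengths alternate between (m+1)q and mq, so at most N^3 / (6 m (m+1)) triples are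
   bad, a fraction 4 / (k (k + 2)) of C(N, 3) asymptotically. *)

Lemma leq_sum_nat m n (F G : nat -> nat) :
  (forall i, m <= i < n -> F i <= G i) ->
  \sum_(m <= i < n) F i <= \sum_(m <= i < n) G i.
Proof.
move=> leFG; rewrite big_nat_cond [X in _ <= X]big_nat_cond.
by apply: leq_sum => i /andP[/leFG].
Qed.

Lemma leq_sum_nat_range (F : nat -> nat) a b c d : c <= a -> b <= d ->
  \sum_(a <= i < b) F i <= \sum_(c <= i < d) F i.
Proof.
move=> leca lebd; have [leab|ltba] := leqP a b; last by rewrite big_geq // ltnW.
rewrite (@big_cat_nat _ _ _ a c d) ?(leq_trans leab) //.
rewrite (@big_cat_nat _ _ _ b a d) //.
exact: leq_trans (leq_addr _ _) (leq_addl _ _).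
Qed.

Lemma bin3E n : 6 * 'C(n, 3) = n * n.-1 * n.-2.
Proof. by rewrite mulnC (bin_ffact n 3) !ffactnS ffactn0 muln1 mulnA. Qed.

Lemma sum_mul_sub_bin3 N : \sum_(0 <= v < N) v * (N - v.+1) = 'C(N, 3).
Proof.
elim: N => [|N IHN]; first by rewrite big_geq.
rewrite big_nat_recr //= subSS subnn muln0 addn0 binS -IHN -bin2_sum -big_split /=.
by apply: eq_big_nat => v /andP[_ ltvN]; rewrite subSS -mulnSr -subSn.
Qed.

Lemma sum_mul_dists_le_cube L U : L <= U ->
  6 * \sum_(L.+1 <= v < U.+1) (v - L) * (U - v) <= (U - L) ^ 3.
Proof.
move=> leLU; rewrite -{1}(add0n L.+1) big_addn subSS.
have -> : \sum_(0 <= i < U - L) (i + L.+1 - L) * (U - (i + L.+1))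
        = 'C((U - L).+1, 3).
  rewrite -sum_mul_sub_bin3 big_nat_recl // mul0n add0n.
  by apply: eq_big_nat => i /andP[_ lti]; congr (_ * _); lia.
by rewrite bin3E /=; case: (U - L) => [|d] //=; nia.
Qed.

Lemma big_nat_partition (F E : nat -> nat) K :
  (forall c, c < K -> E c <= E c.+1) ->
  \sum_(E 0 <= v < E K) F v = \sum_(0 <= c < K) \sum_(E c <= v < E c.+1) F v.
Proof.
elim: K => [|K IHK] leE; first by rewrite !big_geq.
have leE' c : c < K -> E c <= E c.+1 by move=> ltcK; apply/leE/ltnW.
have le0K : E 0 <= E K.
  elim: K {IHK leE} leE' => // K IHK leE.
  by apply: leq_trans (IHK _) (leE _ _) => // c ltcK; apply/leE/ltnW.
by rewrite big_nat_recr //= -IHK // -big_cat_nat // leE.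
Qed.

Lemma count_gt_affine a B Z v :
  a * \sum_(0 <= u < v) (Z < a * u + B) <= a * v + B - Z.
Proof.
elim: v => [|v IHv]; first by rewrite big_geq // muln0.
rewrite big_nat_recr //= mulnDr mulnS.
by case: (ltnP Z (a * v + B)) => /= h; rewrite ?muln1 ?muln0; lia.
Qed.

Lemma count_le_affine b B Z s N :
  b * \sum_(s <= w < N) (B + b * w <= Z) <= minn (Z + b) (B + b * N) - (B + b * s).
Proof.
elim: N => [|N IHN]; first by rewrite big_geq // muln0.
have [ltNs|lesN] := ltnP N s; first by rewrite big_geq ?muln0.
rewrite big_nat_recr //= mulnDr.
have : b * s <= b * N by rewrite leq_mul2l lesN orbT.
by case: (leqP (B + b * N) Z) => /= h; rewrite ?muln1 ?muln0; lia.
Qed.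

Lemma subset_chain_eq (T : finType) (A B C : {set T}) :
  A \subset C -> C \subset B -> #|B| <= #|A| -> A = C /\ C = B.
Proof.
move=> sAC sCB leBA; have leAC := subset_leq_card sAC; have leCB := subset_leq_card sCB.
by split; apply/eqP; rewrite eqEcard ?sAC ?sCB; lia.
Qed.

Lemma sum_ordered_triples N :
  \sum_(0 <= v < N) \sum_(0 <= u < v) \sum_(v.+1 <= w < N) 1 = 'C(N, 3).
Proof.
rewrite -sum_mul_sub_bin3; apply: eq_bigr => v _.
by rewrite sum_nat_const_nat sum_nat_const_nat !muln1 subn0.
Qed.

Lemma card_triples n (P : nat -> nat -> nat -> bool) :
  #|[set t : 'I_n * 'I_n * 'I_n | P t.1.1 t.1.2 t.2]| =
  \sum_(0 <= u < n) \sum_(0 <= v < n) \sum_(0 <= w < n) P u v w.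
Proof.
rewrite big_mkord; under eq_bigr => u _ do rewrite big_mkord.
under eq_bigr => u _ do under eq_bigr => v _ do rewrite big_mkord.
rewrite !pair_bigA cardsE -sum1_card big_mkcond /=.
by apply: eq_bigr => t _; rewrite unfold_in; case: P.
Qed.

Lemma sum_ordered_triples_le n N (P : nat -> nat -> nat -> bool) : N <= n ->
  \sum_(0 <= v < N) \sum_(0 <= u < v) \sum_(v.+1 <= w < N) P u v w <=
  \sum_(0 <= u < n) \sum_(0 <= v < n) \sum_(0 <= w < n) [&& u < v, v < w & P u v w].
Proof.
move=> leNn; rewrite exchange_big_nat.
apply: leq_trans (leq_sum_nat_range _ (leqnn 0) leNn); apply: leq_sum_nat => v /andP[_ ltvN].
apply: leq_trans (leq_sum_nat_range _ (leqnn 0) (ltnW (leq_trans ltvN leNn))).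
apply: leq_sum_nat => u /andP[_ ltuv].
apply: leq_trans (leq_sum_nat_range _ (leq0n _) leNn).
by apply: leq_sum_nat => w /andP[ltvw _]; rewrite ltuv ltvw.
Qed.

Lemma good_count_ge n k (phi : labeling n k) (lab : nat -> nat -> nat) N :
  (forall x y : 'I_n, phi (x, y) = lab x y :> nat) -> N <= n ->
  \sum_(0 <= v < N) \sum_(0 <= u < v) \sum_(v.+1 <= w < N) (lab u v < lab v w : nat)
  <= good_count phi.
Proof.
move=> phiE leNn; rewrite /good_count.
apply: leq_trans (sum_ordered_triples_le _ leNn) _; rewrite -card_triples.
by apply/eq_leq/eq_card => -[[u v] w]; rewrite !inE /good /= !phiE.
Qed.

Section ThresholdLabeling.

Variables (g : nat -> nat) (K : nat).
Hypothesis g_gt0 : forall c, c < K -> 0 < g c.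

Definition cut c := \sum_(0 <= i < c) g i.

Definition above c u v : bool := (g c.-1 + g c) * cut c < g c * u + g c.-1 * v.

Definition lab u v := #|[set t : 'I_K.-1 | above t.+1 u v]|.

Definition bad_at v :=
  \sum_(0 <= u < v) \sum_(v.+1 <= w < cut K) (lab v w <= lab u v : nat).

Lemma cutS c : cut c.+1 = cut c + g c.
Proof. by rewrite /cut big_nat_recr. Qed.

Lemma cut0 : cut 0 = 0.
Proof. by rewrite /cut big_geq. Qed.

Lemma cut_window c : cut c.+2 - cut c = g c + g c.+1.
Proof. by rewrite !cutS -addnA addKn. Qed.

Lemma leq_cut c d : c <= d -> cut c <= cut d.
Proof. by move=> lecd; rewrite /cut (@big_cat_nat _ _ _ c 0 d) ?leq_addr. Qed.

Lemma above_lt c u v : u <= v -> above c u v -> cut c < v.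
Proof.
rewrite /above => leuv; rewrite addnC => lt_above.
have : (g c + g c.-1) * cut c < (g c + g c.-1) * v.
  by apply: leq_trans lt_above _; rewrite mulnDl leq_add2r leq_mul2l leuv orbT.
by rewrite ltn_mul2l => /andP[].
Qed.

Lemma above_gt c v w : 0 < c < K -> cut c < v -> v <= w -> above c v w.
Proof.
move=> /andP[c_gt0 ltcK] ltcv levw; rewrite /above.
have gc_gt0 : 0 < g c.-1 + g c by rewrite addn_gt0 (g_gt0 ltcK) orbT.
apply: leq_trans (_ : (g c.-1 + g c) * v <= _); first by rewrite ltn_pmul2l.
by rewrite mulnDl addnC leq_add2l leq_mul2l levw orbT.
Qed.

Lemma bad_above u v w : u < v -> v <= w -> lab v w <= lab u v ->
  (forall t : 'I_K.-1, cut t.+1 < v -> above t.+1 u v) /\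
  (forall t : 'I_K.-1, v <= cut t.+1 -> ~~ above t.+1 v w).
Proof.
move=> ltuv levw lebad.
have ltK (t : 'I_K.-1) : t.+1 < K by have := ltn_ord t; lia.
have sAC : [set t : 'I_K.-1 | above t.+1 u v] \subset [set t : 'I_K.-1 | cut t.+1 < v].
  by apply/subsetP => t; rewrite !inE; apply/above_lt/ltnW.
have sCB : [set t : 'I_K.-1 | cut t.+1 < v] \subset [set t : 'I_K.-1 | above t.+1 v w].
  by apply/subsetP => t; rewrite !inE => ltcv; apply: above_gt => //; rewrite ltK.
have [eqAC eqCB] := subset_chain_eq sAC sCB lebad.
split=> t.
- by move/setP/(_ t): eqAC; rewrite !inE => ->.
- by move/setP/(_ t): eqCB; rewrite !inE ltnNge => <- ->.
Qed.

Lemma bad_at_le_mul c v : c < K -> cut c < v <= cut c.+1 ->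
  bad_at v <= (\sum_(0 <= u < v) ((c == 0) || above c u v)) *
              (\sum_(v.+1 <= w < cut K) ((c.+1 == K) || ~~ above c.+1 v w)).
Proof.
move=> ltcK /andP[ltcv levc]; rewrite big_distrl /= /bad_at.
apply: leq_sum_nat => u /andP[_ ltuv]; rewrite big_distrr /=.
apply: leq_sum_nat => w /andP[ltvw _].
have [/(bad_above ltuv (ltnW ltvw)) [belowv abovev]|//] := leqP (lab v w) (lab u v).
rewrite muln_gt0 !lt0b; apply/andP; split.
- case: c ltcK ltcv {levc} => //= c ltcK ltcv.
  have ltc : c < K.-1 by lia.
  exact: (belowv (Ordinal ltc)).
- have [//|neK] := eqVneq c.+1 K.
  have ltc : c < K.-1 by lia.
  exact: (abovev (Ordinal ltc)).
Qed.

Lemma left_count c v : cut c < v ->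
  g c * \sum_(0 <= u < v) ((c == 0) || above c u v) <=
  (cut c.+1 - cut c.-1) * (v - cut c).
Proof.
case: c => [|c] ltcv.
  by rewrite sum_nat_const_nat muln1 cutS cut0 !subn0.
rewrite /= cut_window /above /=.
apply: leq_trans (count_gt_affine _ _ _ _) _.
rewrite mulnBr mulnDl; lia.
Qed.

Lemma right_count c v : v <= cut c.+1 ->
  g c * \sum_(v.+1 <= w < cut K) ((c.+1 == K) || ~~ above c.+1 v w) <=
  (cut c.+2 - cut c) * (cut c.+1 - v).
Proof.
move=> levc; rewrite cut_window.
have [eqK|neK] := eqVneq c.+1 K.
  rewrite sum_nat_const_nat muln1 -eqK.
  by apply: leq_mul; [exact: leq_addr | rewrite cutS; lia].
under eq_bigr => w _ do rewrite /above /= -leqNgt.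
apply: leq_trans (count_le_affine _ _ _ _ _) _.
rewrite mulnBr; lia.
Qed.

Lemma cell_bad c : c < K ->
  6 * \sum_((cut c).+1 <= v < (cut c.+1).+1) bad_at v <=
  g c * (cut c.+1 - cut c.-1) * (cut c.+2 - cut c).
Proof.
move=> ltcK; set W1 := cut c.+1 - cut c.-1; set W2 := cut c.+2 - cut c.
have per_v v : cut c < v < (cut c.+1).+1 ->
    g c ^ 2 * bad_at v <= W1 * W2 * ((v - cut c) * (cut c.+1 - v)).
  move=> /andP[ltcv levc]; rewrite mulnACA.
  apply: leq_trans (leq_mul (left_count ltcv) (right_count levc)).
  by rewrite -mulnACA leq_mul2l bad_at_le_mul ?ltcv ?orbT.
have g2_gt0 : 0 < g c ^ 2 by rewrite expn_gt0 g_gt0.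
rewrite -(leq_pmul2l g2_gt0) mulnCA big_distrr /=.
apply: leq_trans (leq_mul (leqnn 6) (leq_sum_nat per_v)) _.
rewrite -big_distrr /= mulnCA.
apply: leq_trans (leq_mul (leqnn _) (sum_mul_dists_le_cube (leq_cut (leqnSn c)))) _.
by rewrite cutS addKn; apply: eq_leq; ring.
Qed.

Lemma sum_bad :
  6 * \sum_(0 <= v < cut K) bad_at v <=
  \sum_(0 <= c < K) g c * (cut c.+1 - cut c.-1) * (cut c.+2 - cut c).
Proof.
have bad0 : bad_at 0 = 0 by rewrite /bad_at big_geq.
have shift : \sum_(0 <= v < cut K) bad_at v <= \sum_((cut 0).+1 <= v < (cut K).+1) bad_at v.
  have -> : \sum_((cut 0).+1 <= v < (cut K).+1) bad_at v = \sum_(0 <= v < (cut K).+1) bad_at v.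
    by rewrite [RHS]big_ltn // bad0 cut0.
  by rewrite big_nat_recr ?leq_addr.
apply: leq_trans (leq_mul (leqnn 6) shift) _.
rewrite (@big_nat_partition _ (fun c => (cut c).+1)) => [|c _]; last exact: leq_cut.
rewrite big_distrr /=; apply: leq_sum_nat => c /andP[_ ltcK].
exact: cell_bad.
Qed.

Lemma lab_lt u v : 0 < K -> lab u v < K.
Proof. by move=> K_gt0; rewrite /lab (leq_ltn_trans (max_card _)) // card_ord prednK. Qed.

Lemma f_lower_threshold n M : 0 < K -> cut K <= n ->
  (forall c, c < K -> (cut c.+1 - cut c.-1) * (cut c.+2 - cut c) <= M) ->
  6 * 'C(cut K, 3) <= 6 * f n K + M * cut K.
Proof.
move=> K_gt0 leNn leM.
pose phi : labeling n K := [ffun p : 'I_n * 'I_n => Ordinal (lab_lt p.1 p.2 K_gt0)].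
have phiE (x y : 'I_n) : phi (x, y) = lab x y :> nat by rewrite ffunE.
have good_le := good_count_ge phiE leNn.
have bad_le : 6 * \sum_(0 <= v < cut K) bad_at v <= M * cut K.
  apply: leq_trans sum_bad _; rewrite /cut big_distrr /=.
  by apply: leq_sum_nat => c /andP[_ ltcK]; rewrite -mulnA mulnC leq_mul2r leM ?orbT.
rewrite -sum_ordered_triples.
have -> : \sum_(0 <= v < cut K) \sum_(0 <= u < v) \sum_(v.+1 <= w < cut K) 1 =
    \sum_(0 <= v < cut K) \sum_(0 <= u < v) \sum_(v.+1 <= w < cut K) (lab u v < lab v w : nat)
    + \sum_(0 <= v < cut K) bad_at v.
  rewrite -big_split; apply: eq_bigr => v _; rewrite -big_split; apply: eq_bigr => u _.
  by rewrite -big_split; apply: eq_bigr => w _; case: leqP.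
rewrite mulnDr leq_add // leq_mul2l /=.
apply: leq_trans good_le _; exact: (@leq_bigmax _ (@good_count n K)).
Qed.

End ThresholdLabeling.

Lemma double_cases c : exists h, c = h.*2 \/ c = h.*2.+1.
Proof.
by exists c./2; rewrite -{1 3}(odd_double_half c); case: odd; [right | left].
Qed.

Definition even_gap m q c := (if odd c then (c./2).+1 else m - c./2) * q.

Lemma even_gap_double m q h : even_gap m q h.*2 = (m - h) * q.
Proof. by rewrite /even_gap odd_double doubleK. Qed.

Lemma even_gap_doubleS m q h : even_gap m q h.*2.+1 = h.+1 * q.
Proof. by rewrite /even_gap /= odd_double uphalf_double. Qed.

Lemma even_gap_gt0 m q c : 0 < q -> c < m.*2 -> 0 < even_gap m q c.
Proof.
move=> q_gt0; have [h [->|->]] := double_cases c.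
- by rewrite even_gap_double ltn_double muln_gt0 q_gt0 subn_gt0 andbT.
- by rewrite even_gap_doubleS muln_gt0 q_gt0.
Qed.

Lemma even_gap_pair m q c : c < m.*2 ->
  even_gap m q c + even_gap m q c.+1 = (if odd c then m else m.+1) * q.
Proof.
have [h [->|->]] := double_cases c.
- rewrite ltn_double even_gap_double even_gap_doubleS odd_double => lthm.
  by rewrite -mulnDl; congr (_ * _); lia.
- rewrite ltn_Sdouble -doubleS even_gap_double even_gap_doubleS /= odd_double => lthm.
  by rewrite -mulnDl; congr (_ * _); lia.
Qed.

Lemma cut_even_gap m q : cut (even_gap m q) m.*2 = m * m.+1 * q.
Proof.
suff cut_double j : j <= m -> cut (even_gap m q) j.*2 = j * m.+1 * q by rewrite cut_double.
elim: j => [|j IHj] ltjm; first by rewrite cut0.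
rewrite doubleS !cutS -addnA even_gap_pair ?ltn_double // odd_double IHj; last exact: ltnW.
by rewrite -!mulnDl mulSn addnC.
Qed.

Lemma even_gap_window m q c : c < m.*2 ->
  (cut (even_gap m q) c.+1 - cut (even_gap m q) c.-1) *
  (cut (even_gap m q) c.+2 - cut (even_gap m q) c) = m * m.+1 * q ^ 2.
Proof.
move=> ltcm; rewrite cut_window even_gap_pair //.
case: c ltcm => [|d] ltdm.
  by rewrite cutS cut0 subn0 add0n /even_gap /= subn0; ring.
rewrite /= cut_window even_gap_pair ?(ltnW ltdm) //=.
by case: odd; rewrite /=; ring.
Qed.

Lemma f_even_lower m n : 0 < m ->
  m * m.+1 * (n - (m * m.+1).+1) ^ 3 <= m * m.+1 * (6 * f n m.*2) + n ^ 3.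
Proof.
move=> m_gt0; set D := m * m.+1; set q := n %/ D.
have D_gt0 : 0 < D by rewrite muln_gt0 m_gt0.
have ltnN : n < q.+1 * D := ltn_ceil n D_gt0.
have [q0|q_gt0] := posnP q.
  by move: ltnN; rewrite q0 mul1n => ltnD; rewrite (_ : n - D.+1 = 0) ?exp0n ?muln0 //; lia.
have m2_gt0 : 0 < m.*2 by rewrite double_gt0.
have leNn : cut (even_gap m q) m.*2 <= n by rewrite cut_even_gap -/D mulnC leq_divM.
have := f_lower_threshold (fun c => @even_gap_gt0 m q c q_gt0) (M := D * q ^ 2) (n := n)
  m2_gt0 leNn (fun c ltcm => eq_leq (even_gap_window q ltcm)).
rewrite cut_even_gap -/D bin3E => leN.
have le_N_n : D * q <= n by rewrite mulnC leq_divM.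
have cube_le : (n - D.+1) ^ 3 <= D * q * (D * q).-1 * (D * q).-2.
  apply: leq_trans (_ : ((D * q).-2) ^ 3 <= _).
    by rewrite leq_exp2r //; lia.
  by rewrite -[3]/(1 + 1 + 1) !expnD expn1 leq_mul2r leq_mul ?orbT //; lia.
apply: leq_trans (leq_mul (leqnn D) (leq_trans cube_le leN)) _.
rewrite mulnDr leq_add2l (_ : D * _ = (D * q) ^ 3); last by ring.
by rewrite leq_exp2r.
Qed.

Local Open Scope ring_scope.

Lemma cubic_deficit_asymptotic (F : nat -> nat) (D a : nat) : (0 < D)%N ->
  (forall n, D * (n - a) ^ 3 <= D * (6 * F n) + n ^ 3)%N ->
  forall eps : rat, 0 < eps -> exists N : nat, forall n : nat, (N <= n)%N ->
    (1 - D%:R^-1 - eps) * ('C(n, 3))%:R <= (F n)%:R.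
Proof.
move=> D_gt0 leF eps eps_gt0.
set b := Num.Def.archi_bound (3 * a%:R / eps).
exists (a + b)%N => n leabn.
have lean : (a <= n)%N by apply: leq_trans leabn; apply: leq_addr.
have lebn : (b <= n)%N by apply: leq_trans leabn; apply: leq_addl.
set x : rat := n%:R; set y : rat := a%:R; set d : rat := D%:R.
have d_gt0 : 0 < d by rewrite ltr0n.
have y_ge0 : 0 <= y by rewrite ler0n.
have le_yx : y <= x by rewrite ler_nat.
have deficit : d * (x - y) ^+ 3 <= d * (6 * (F n)%:R) + x ^+ 3.
  by rewrite -natrB // -!natrX -[6]/(6%:R) -!natrM -natrD ler_nat.
have lt_ax : 3 * y < eps * x.
  have lt_b : 3 * y / eps < b%:R by apply: archi_boundP; rewrite divr_ge0 ?mulr_ge0 // ltW.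
  rewrite -ltr_pdivrMl // mulrC; apply: lt_le_trans lt_b _; rewrite ler_nat.
  exact: lebn.
have binx : 6 * ('C(n, 3))%:R <= x ^+ 3.
  rewrite -[6]/(6%:R) -natrM -natrX bin3E ler_nat -[3%N]/(1 + 1 + 1)%N !expnD expn1.
  by apply: leq_mul; [apply: leq_mul|]; lia.
have main : (1 - d^-1 - eps) * x ^+ 3 <= 6 * (F n)%:R.
  have div : (x - y) ^+ 3 <= 6 * (F n)%:R + d^-1 * x ^+ 3.
    by rewrite -(ler_pM2l d_gt0) mulrDr mulVKf ?gt_eqF.
  have cube_lb : x ^+ 3 - 3 * y * x ^+ 2 <= (x - y) ^+ 3.
    have : 0 <= y ^+ 2 * (3 * x - y) by rewrite mulr_ge0 ?sqr_ge0 //; lra.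
    have -> : y ^+ 2 * (3 * x - y) = (x - y) ^+ 3 - (x ^+ 3 - 3 * y * x ^+ 2) by ring.
    by rewrite subr_ge0.
  have small : 3 * y * x ^+ 2 <= eps * x ^+ 3.
    have := ler_wpM2r (sqr_ge0 x) (ltW lt_ax).
    by rewrite -[eps * x * _]mulrA -exprS.
  lra.
have [c_le0|c_gt0] := lerP (1 - d^-1 - eps) 0.
  by apply: le_trans (ler0n _ (F n)); rewrite mulr_le0_ge0.
have := ler_wpM2l (ltW c_gt0) binx; lra.
Qed.

Unset Implicit Arguments.

Theorem lemma4p5 (k : nat) :
  (2 <= k)%N -> ~~ odd k ->
  forall eps : rat, 0 < eps ->
  exists N : nat, forall n : nat, (N <= n)%N ->
    (1 - 4 / (k * (k + 2))%:R - eps) * ('C(n, 3))%:R <= (f n k)%:R.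
Proof.
move=> k_ge2 k_even eps eps_gt0.
have k_double : k = k./2.*2 by rewrite -{1}(odd_double_half k) (negbTE k_even).
set m := k./2 in k_double; have m_gt0 : (0 < m)%N by move: k_ge2; rewrite k_double; lia.
have -> : 4 / (k * (k + 2))%:R = (m * m.+1)%:R^-1 :> rat.
  rewrite k_double (_ : (m.*2 * (m.*2 + 2) = 4 * (m * m.+1))%N); last by lia.
  by rewrite natrM invfM mulrA divff ?mul1r.
apply: (cubic_deficit_asymptotic (F := f ^~ k) (a := (m * m.+1).+1)) => // [|n].
  by rewrite muln_gt0 m_gt0.
by rewrite k_double; exact: f_even_lower.
Qed.
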